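(* Let $V=\{v_1,\dots,v_n\}$ be a finite set with $n\geq 2$, let $d$ be a monotone and consistent symmetric set function on $V$, let $\tau\in\mathbb{R}$, and let $v_1,\dots,v_n$ be a lax-back order with threshold $\tau$ for $(V,d)$. Then $$\min\{\tau, d(\{v_n\},V\setminus\{v_n\})\}=\min\{\tau,\lambda_{(V,d)}(v_n,v_{n-1})\}.$$
   Context: A symmetric set function $d$ on a finite set $V$ assigns a real number $d(S,T)$ to every ordered pair $(S,T)$ of disjoint subsets of $V$, such that $d(S,T)=d(T,S)$. It is monotone if $d(S,T')\leq d(S,T)$ whenever $S,T$ are disjoint and $T'\subseteq T$; consistent if for all pairwise disjoint $R,S,T$, $d(S,R)\geq d(T,R)$ implies $d(S,R\cup T)\geq d(S\cup R,T)$. For $s,t\in V$, $\lambda_{(V,d)}(s,t)=\min\{d(S,V\setminus S)\mid s\in S\subseteq V,\ t\notin S\}$. Singletons $\{v\}$ may be written $v$. An ordering $v_1,\dots,v_n$ of $V$ is a lax-back order with threshold $\tau$ for $(V,d)$ if $\min\{\tau,d(v_i,\{v_1,\dots,v_{i-1}\})\}\geq\min\{\tau,d(v_j,\{v_1,\dots,v_{i-1}\})\}$ for all $1\leq i<j\leq n$. *)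

From mathcomp Require Import all_boot all_order all_algebra.
Set Implicit Arguments. Unset Strict Implicit. Unset Printing Implicit Defensive.
Import Order.TTheory GRing.Theory Num.Theory.
Local Open Scope ring_scope.

(* A symmetric set function on V is modelled as a total function
   d : {set V} -> {set V} -> R; all properties are only required on
   (ordered) pairs of disjoint sets, and only such values are used. *)
Section SetFun.
Variables (R : realFieldType) (V : finType).
Implicit Types (d : {set V} -> {set V} -> R).

Definition symmetric_setfun d :=
  forall S T : {set V}, [disjoint S & T] -> d S T = d T S.

Definition monotone_setfun d :=
  forall S T T' : {set V}, [disjoint S & T] -> T' \subset T -> d S T' <= d S T.

Definition consistent_setfun d :=
  forall Q S T : {set V},
    [disjoint Q & S] -> [disjoint S & T] -> [disjoint Q & T] ->
    d T Q <= d S Q -> d (S :|: Q) T <= d S (Q :|: T).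

(* lambda_{(V,d)}(s,t) = min { d(S, V \ S) | s \in S, t \notin S }.
   The seed value d({s}, V\{s}) is itself one of the candidates when s <> t. *)
Definition lambda_vd d (s t : V) : R :=
  \big[Num.min/d [set s] (~: [set s])]_(S : {set V} | (s \in S) && (t \notin S))
     d S (~: S).

(* Ordering v_1..v_n given by a bijection v : 'I_n -> V (0-based: v_{i+1} = v i).
   prefix v i = {v_1, ..., v_i} (0-based: images of indices < i). *)
Definition prefix n (v : 'I_n -> V) (i : nat) : {set V} :=
  v @: [set j : 'I_n | (j < i)%N].

Definition lax_back_order n (v : 'I_n -> V) d (tau : R) :=
  forall i j : 'I_n, (i < j)%N ->
    Num.min tau (d [set v j] (prefix v i)) <= Num.min tau (d [set v i] (prefix v i)).
End SetFun.

From Pilot Require Import Defs.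
From mathcomp Require Import all_boot all_order all_algebra.
Import Order.TTheory GRing.Theory Num.Theory.
(* Re-imported so that [prefix] denotes Defs.prefix rather than seq.prefix. *)
Import Defs.
Set Implicit Arguments. Unset Strict Implicit. Unset Printing Implicit Defensive.
Local Open Scope ring_scope.

(* The bound lambda(v_n, v_(n-1)) <= d(v_n, V \ v_n) is trivial, {v_n} being one
   of the competing cuts.  Conversely, fix S with v_n in S and v_(n-1) not in S,
   and let S induce on each prefix P of the ordering the cut d(P :&: S, P :\: S).
   Split the ordering into maximal runs of vertices on the same side of S.  By
   induction over the runs, every vertex v_j starting a run, with P the prefix
   before it, satisfies min(tau, d(v_j, P)) <= min(tau, cut induced on P + v_j).
   For the start u of the next run, with prefix P', the vertices of P' on u's side
   all precede v_j.  Consistency, applied to u and the two sides of P', either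
   bounds d(u, P') by the cut induced on P' + u, or makes d(u, P) exceed the cut
   induced on P + v_j; by the lax-back inequality
   min(tau, d(u, P)) <= min(tau, d(v_j, P)) that cut, and with it the larger cut
   induced on P' + u, is then at least tau.  As v_n starts the last run and its
   prefix is V \ v_n, this is the claim. *)

Lemma disjoint_setD (T : finType) (A B : {set T}) : [disjoint A :\: B & B].
Proof. by have /subsetDP[] := subxx (A :\: B). Qed.

Lemma disjoint_setID (T : finType) (A B : {set T}) : [disjoint A :&: B & A :\: B].
Proof. by rewrite disjoint_sym (disjointWr (subsetIr A B)) ?disjoint_setD. Qed.

Section CutOn.
Variables (R : realFieldType) (V : finType) (d : {set V} -> {set V} -> R).
Hypotheses (d_sym : symmetric_setfun d) (d_mono : monotone_setfun d)
  (d_cons : consistent_setfun d).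

Definition cut_on (Z P : {set V}) : R := d (P :&: Z) (P :\: Z).

Lemma cut_onC (Z P : {set V}) : cut_on (~: Z) P = cut_on Z P.
Proof.
by rewrite /cut_on [P :\: ~: Z]setDE setCK -setDE (d_sym (disjoint_setID P Z)).
Qed.

Lemma cut_onT (Z : {set V}) : cut_on Z [set: V] = d Z (~: Z).
Proof. by rewrite /cut_on setTI setTD. Qed.

Lemma monotone_setfun2 (S T S' T' : {set V}) :
  [disjoint S & T] -> S' \subset S -> T' \subset T -> d S' T' <= d S T.
Proof.
move=> dST sS sT; have dS'T : [disjoint S' & T] by apply: disjointWl dST.
apply: le_trans (d_mono dS'T sT) _.
by rewrite d_sym // (d_sym dST) d_mono // disjoint_sym.
Qed.

Lemma cut_on_subset (Z P P' : {set V}) : P \subset P' -> cut_on Z P <= cut_on Z P'.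
Proof. by move=> sP; apply: monotone_setfun2; rewrite ?disjoint_setID ?setSI ?setSD. Qed.

Lemma consistent_cut_on (Z P : {set V}) (u : V) : u \in Z -> u \notin P ->
  d (P :&: Z) [set u] <= cut_on Z P -> d [set u] P <= cut_on Z (u |: P).
Proof.
move=> uZ uP le_uP.
have duP : [disjoint [set u] & P] by rewrite disjoints1.
have dPZu : [disjoint P :&: Z & [set u]].
  by rewrite disjoint_sym (disjointWr (subsetIl P Z)).
have dPDU : [disjoint P :\: Z & P :&: Z :|: [set u]].
  by rewrite (disjointWr _ (disjoint_setD P Z)) // subUset subsetIr sub1set.
have dPDu : [disjoint P :\: Z & [set u]] by apply: disjointWr dPDU; apply: subsetUr.
have -> : cut_on Z (u |: P) = d (P :&: Z :|: [set u]) (P :\: Z).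
  rewrite /cut_on setIUl setDUl (setIidPl (_ : [set u] \subset Z)) ?sub1set //.
  have /eqP -> : [set u] :\: Z == set0 by rewrite setD_eq0 sub1set.
  by rewrite set0U setUC.
rewrite (d_sym duP) -(d_sym dPDU) -{1}(setID P Z) setUC.
apply: (d_cons (disjoint_setID P Z) dPDu dPZu).
by rewrite -(d_sym dPZu) -(d_sym (disjoint_setID P Z)).
Qed.

Lemma min_cut_on_step (tau : R) (Z P Q : {set V}) (u x : V) :
  u \in Z -> u \notin P -> x |: Q \subset P -> P :&: Z \subset Q ->
  Num.min tau (d [set u] Q) <= Num.min tau (d [set x] Q) ->
  Num.min tau (d [set x] Q) <= Num.min tau (cut_on Z (x |: Q)) ->
  Num.min tau (d [set u] P) <= Num.min tau (cut_on Z (u |: P)).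
Proof.
move=> uZ uP sxQP sPZQ le_uxQ le_xQcut.
have [le_uP|lt_cutP] := leP (d (P :&: Z) [set u]) (cut_on Z P).
  by apply: le_min2 => //; apply: consistent_cut_on.
have le_cutQP : cut_on Z (x |: Q) <= cut_on Z P by apply: cut_on_subset.
have duP : [disjoint [set u] & P] by rewrite disjoints1.
have sQP : Q \subset P by apply: subset_trans sxQP; apply: subsetUr.
have le_uQ : d (P :&: Z) [set u] <= d [set u] Q.
  rewrite -d_sym; last by apply: disjointWr duP; apply: subsetIl.
  by apply: d_mono; first exact: disjointWr duP.
have le_tau : tau <= cut_on Z (x |: Q).
  move: (le_trans le_uxQ le_xQcut); rewrite le_min => /andP[_].
  rewrite ge_min => /orP[// | le_uQcut].
  by rewrite leNgt (le_lt_trans le_cutQP (lt_le_trans lt_cutP le_uQ)) in le_uQcut.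
suff le_tau_cut : tau <= cut_on Z (u |: P) by rewrite le_min !ge_min lexx le_tau_cut.
by apply: le_trans le_tau (le_trans le_cutQP (cut_on_subset _ (subsetUr _ _))).
Qed.
End CutOn.

Section Prefix.
Variables (V : finType) (n : nat) (v : 'I_n.+1 -> V).
Hypothesis v_bij : bijective v.

Let v_inj : injective v. Proof. exact: bij_inj. Qed.

Lemma mem_prefix (k : 'I_n.+1) (i : nat) : (v k \in prefix v i) = (k < i)%N.
Proof. by rewrite /prefix mem_imset // inE. Qed.

Lemma prefix_subset (i j : nat) : (i <= j)%N -> prefix v i \subset prefix v j.
Proof.
by move=> le_ij; apply/imsetS/subsetP => k; rewrite !inE => lt_ki; apply: leq_trans lt_ki le_ij.
Qed.

Lemma prefix0 : prefix v 0 = set0.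
Proof. by have [g _ gK] := v_bij; apply/setP => x; rewrite -(gK x) mem_prefix inE. Qed.

Lemma prefixS (j : nat) : (j <= n)%N -> prefix v j.+1 = v (inord j) |: prefix v j.
Proof.
move=> le_jn; have [g _ gK] := v_bij; apply/setP => x.
by rewrite -(gK x) !inE !mem_prefix ltnS leq_eqVlt (inj_eq v_inj) -val_eqE /= inordK.
Qed.

Lemma prefix_ord_max : prefix v n = ~: [set v ord_max].
Proof.
have [g _ gK] := v_bij; apply/setP => x.
rewrite -(gK x) !inE mem_prefix (inj_eq v_inj) -val_eqE /=.
by rewrite ltn_neqAle -ltnS ltn_ord andbT.
Qed.

Lemma prefix_all : prefix v n.+1 = [set: V].
Proof. by have [g _ gK] := v_bij; apply/setP => x; rewrite -(gK x) mem_prefix inE ltn_ord. Qed.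
End Prefix.

Section LaxBackOrder.
Variables (R : realFieldType) (V : finType) (d : {set V} -> {set V} -> R).
Hypotheses (d_sym : symmetric_setfun d) (d_mono : monotone_setfun d)
  (d_cons : consistent_setfun d).
Variables (n : nat) (v : 'I_n.+2 -> V) (tau : R).
Hypotheses (v_bij : bijective v) (v_lax : lax_back_order v d tau).

Local Notation w k := (v (inord k)).

Definition lax_cut_bound (S : {set V}) (j : nat) :=
  Num.min tau (d [set w j] (prefix v j)) <= Num.min tau (cut_on d S (prefix v j.+1)).

Definition same_side (S : {set V}) (j i : nat) :=
  forall k, (j <= k <= i)%N -> (w k \in S) = (w j \in S).

Lemma lax_cut_boundC (S : {set V}) (j : nat) : lax_cut_bound (~: S) j = lax_cut_bound S j.
Proof. by rewrite /lax_cut_bound cut_onC. Qed.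

Lemma same_sideC (S : {set V}) (j i : nat) : same_side (~: S) j i <-> same_side S j i.
Proof. by split=> same k /same; rewrite !inE; [move/negb_inj | move->]. Qed.

Lemma lax_cut_bound0 (S : {set V}) : lax_cut_bound S 0.
Proof.
wlog w0S : S / w 0 \in S.
  move=> bound0; have [w0S | w0SN] := orP (orbN (w 0 \in S)); first exact: bound0.
  by rewrite -lax_cut_boundC bound0 // inE.
rewrite /lax_cut_bound (prefixS v_bij) // (prefix0 v_bij) setU0 /cut_on.
rewrite (setIidPl _) ?sub1set //.
by have /eqP -> : [set w 0] :\: S == set0 by rewrite setD_eq0 sub1set.
Qed.

Lemma lax_cut_boundS (S : {set V}) (j i : nat) : (j <= i)%N -> (i < n.+1)%N ->
  lax_cut_bound S j -> same_side S j i -> (w i.+1 \in S) != (w j \in S) ->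
  lax_cut_bound S i.+1.
Proof.
move=> le_ji lt_in.
wlog wiS : S / w i.+1 \in S.
  move=> step; have [wiS | wiSN] := orP (orbN (w i.+1 \in S)); first exact: step.
  move=> bound_j same diff; rewrite -lax_cut_boundC.
  by apply: step; rewrite ?lax_cut_boundC ?inE ?(inj_eq negb_inj) //; apply/same_sideC.
move=> bound_j same; rewrite wiS eq_sym eqb_id => wjS.
have le_jn : (j <= n.+1)%N by apply: leq_trans le_ji (ltnW lt_in).
have [g _ gK] := v_bij.
rewrite /lax_cut_bound (prefixS v_bij lt_in).
apply: (min_cut_on_step d_sym d_mono d_cons (Q := prefix v j) (x := w j) wiS).
- by rewrite (mem_prefix v_bij) inordK // ltnn.
- by rewrite -(prefixS v_bij) // prefix_subset.
- apply/subsetP => x; rewrite -(gK x) inE !(mem_prefix v_bij) ltnS => /andP[le_xi xS].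
  rewrite ltnNge; apply/negP => le_jx.
  by rewrite -[g x]inord_val same ?le_jx ?inordK // (negbTE wjS) in xS.
- by have := @v_lax (inord j) (inord i.+1); rewrite !inordK //; apply.
- by rewrite -(prefixS v_bij).
Qed.

Lemma lax_cut_bound_run_start (S : {set V}) (i : nat) : (i < n.+2)%N ->
  exists2 j, (j <= i)%N & lax_cut_bound S j /\ same_side S j i.
Proof.
elim: i => [_ | i IH lt_i].
  exists 0%N => //; split; first exact: lax_cut_bound0.
  by move=> k; rewrite leqn0 => /eqP->.
have [j le_ji [bound_j same]] := IH (ltnW lt_i).
have [eq_side | ne_side] := eqVneq (w i.+1 \in S) (w j \in S).
  exists j; first exact: leqW.
  split=> // k /andP[le_jk]; rewrite leq_eqVlt ltnS => /orP[/eqP-> // | le_ki].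
  by apply: same; rewrite le_jk le_ki.
exists i.+1 => //; split; first exact: lax_cut_boundS ne_side.
by move=> k; rewrite -eqn_leq => /eqP->.
Qed.

Lemma min_last_singleton_cut_le (S : {set V}) : v ord_max \in S -> w n \notin S ->
  Num.min tau (d [set v ord_max] (~: [set v ord_max])) <= Num.min tau (d S (~: S)).
Proof.
move=> maxS wnS.
have [j le_jn [bound_j same]] := lax_cut_bound_run_start S (leqnSn n.+1).
have w_max : w n.+1 = v ord_max by congr v; apply: val_inj; rewrite /= inordK.
have := lax_cut_boundS le_jn (ltnSn n) bound_j same.
rewrite /lax_cut_bound w_max (prefix_ord_max v_bij) (prefix_all v_bij) cut_onT; apply.
by rewrite maxS -(same n) ?le_jn ?leqnn.
Qed.
End LaxBackOrder.

Theorem corollary1 (R : realFieldType) (V : finType) (n : nat)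
  (v : 'I_n.+2 -> V) (d : {set V} -> {set V} -> R) (tau : R) :
  bijective v ->
  symmetric_setfun d -> monotone_setfun d -> consistent_setfun d ->
  lax_back_order v d tau ->
  Num.min tau (d [set v ord_max] (~: [set v ord_max])) =
  Num.min tau (lambda_vd d (v ord_max) (v (inord n))).
Proof.
move=> v_bij d_sym d_mono d_cons v_lax.
apply/eqP; rewrite eq_le; apply/andP; split; last first.
  by apply: le_min2 => //; apply: bigmin_le_id.
rewrite le_min ge_min lexx /=.
apply: le_bigmin => [|S /andP[maxS nS]]; first by rewrite ge_min lexx orbT.
have := min_last_singleton_cut_le d_sym d_mono d_cons v_bij v_lax maxS nS.
by rewrite le_min => /andP[_].
Qed.
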